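(* Let $T_1,\dots,T_m$ be conjunctions over variables $x_1,\dots,x_n$, presented online, each of which is the union of some subset of metafeatures $m_1,\dots,m_k$ satisfying the anchor-variable condition. Consider the following online procedure (Algorithm 4): initialize $\mathrm{TS}=\emptyset$ and $\tilde M=\emptyset$; for $r=1,\dots,m$, if $T_r$ is not equal to the union of the metafeatures in $\tilde M$ contained in $T_r$, then (''learning $T_r$ from scratch'') append $T_r$ to $\mathrm{TS}$ and replace $\tilde M$ by the output of Algorithm 3 run on $\mathrm{TS}$. Then the number of targets learned from scratch (appended to $\mathrm{TS}$) is at most $n^2+k$.
   Context: A conjunction/monomial is identified with its set of variables. Metafeatures $m_1,\dots,m_k$ satisfy the anchor-variable condition if each $m_i$ contains a variable $y_i$ belonging to no other $m_j$. For a variable $z$, $N(\mathrm{TS},z)$ is the set of conjunctions in $\mathrm{TS}$ containing $z$. Algorithm 3, on an ordered list $\mathrm{TS}$ of conjunctions: start with no hypothesized metafeatures; for a conjunction $T$ let $h(T)$ be the union of all hypothesized metafeatures produced so far contained in $T$; while some $T\in\mathrm{TS}$ has $T\ne h(T)$, take the least-index such $T$, choose $z\in T\setminus h(T)$ minimal in the sense that no $z'\in T\setminus h(T)$ has $N(\mathrm{TS},z')\subsetneq N(\mathrm{TS},z)$ (ties broken by least variable index), and add the metafeature $\bigcap_{T'\in\mathrm{TS},\,z\in T'}T'$. Output all metafeatures produced. *)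

(* Variables x_1..x_n are 'I_n; a conjunction/monomial is
   identified with its set of variables, i.e. an element of {set 'I_n}. *)
From mathcomp Require Import all_boot all_order.
Set Implicit Arguments. Unset Strict Implicit. Unset Printing Implicit Defensive.

Section Algs.
Variable n : nat.
Notation conj := {set 'I_n}.

Definition hM (M : seq conj) (T : conj) : conj :=
  \bigcup_(m <- M | m \subset T) m.

(* N(TS,z') is a proper subset of N(TS,z), where N(TS,z) is the set of
   conjunctions of TS containing z *)
Definition Nsub (TS : seq conj) (z' z : 'I_n) : bool :=
  all (fun T' : conj => (z' \in T') ==> (z \in T')) TS &&
  has (fun T' : conj => (z \in T') && (z' \notin T')) TS.

Definition newmf (TS : seq conj) (z : 'I_n) : conj :=
  foldr (fun T' acc : conj => T' :&: acc) setT [seq T' <- TS | z \in (T' : conj)].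

(* one iteration of the while loop of Algorithm 3; None = loop exits *)
Definition alg3_step (TS M : seq conj) : option conj :=
  match ohead [seq T <- TS | (T : conj) != hM M T] with
  | None => None
  | Some T =>
    let cand (z : 'I_n) := (z \in T :\: hM M T) &&
                  [forall z', (z' \in T :\: hM M T) ==> ~~ Nsub TS z' z] in
    match ohead [seq z <- enum 'I_n | cand z] with
    | None => None
    | Some z => Some (newmf TS z)
    end
  end.

Fixpoint alg3_fuel (fuel : nat) (TS M : seq conj) : seq conj :=
  match fuel with
  | 0 => M
  | f.+1 => match alg3_step TS M with
            | None => M
            | Some m => alg3_fuel f TS (rcons M m)
            end
  end.

(* Algorithm 3. Each loop iteration strictly increases sum_{T in TS} |h(T)|,
   which is at most n * size TS, so this fuel suffices for the loop to exit. *)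
Definition alg3 (TS : seq conj) : seq conj :=
  alg3_fuel (n * size TS).+1 TS [::].

Definition alg4_step (st : seq conj * seq conj) (T : conj) :=
  let: (TS, M) := st in
  if T != hM M T then (rcons TS T, alg3 (rcons TS T)) else (TS, M).

Definition alg4 (targets : seq conj) : seq conj * seq conj :=
  foldl alg4_step ([::], [::]) targets.

End Algs.

Definition anchor_cond (n k : nat) (mf : 'I_k -> {set 'I_n}) : Prop :=
  forall i : 'I_k, exists y : 'I_n,
    y \in mf i /\ forall j : 'I_k, j != i -> y \notin mf j.

(* A potential argument.  Call a pair (a, b) of variables separated by TS if
   some conjunction of TS contains a but not b, and call newmf TS z a minimal
   metafeature of TS if z is minimal in some T of TS; Algorithm 3 produces every
   minimal metafeature of TS.  Appending a target T that the current hypotheses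
   do not cover creates a new minimal metafeature (take z minimal in T among the
   uncovered variables), and each minimal metafeature destroyed by the append
   comes with a newly separated pair (z, b).  Hence the number of separated pairs
   plus the number of minimal metafeatures, at most n^2 + k, strictly increases
   whenever a target is learned from scratch; the bound k uses the anchors: every
   minimal metafeature equals newmf TS y_j for the anchor y_j of some m_j. *)

From mathcomp Require Import all_boot all_order.
From mathcomp Require Import zify.
Set Implicit Arguments. Unset Strict Implicit. Unset Printing Implicit Defensive.

Section Metafeatures.
Variable n : nat.
Notation conj := {set 'I_n}.
Implicit Types (TS M : seq conj) (T D X m : conj) (a b z w : 'I_n).

Definition Nsubeq TS a b : bool := all (fun T : conj => (a \in T) ==> (b \in T)) TS.

Lemma NsubE TS a b : Nsub TS a b = Nsubeq TS a b && ~~ Nsubeq TS b a.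
Proof.
rewrite /Nsub /Nsubeq -has_predC; congr (_ && _).
by apply: eq_has => T /=; case: (a \in T); case: (b \in T).
Qed.

Lemma Nsubeq_refl TS a : Nsubeq TS a a.
Proof. by apply/allP => T _; apply/implyP. Qed.

Lemma Nsubeq_trans TS b a c : Nsubeq TS a b -> Nsubeq TS b c -> Nsubeq TS a c.
Proof.
move=> /allP ab /allP bc; apply/allP => T TST; apply/implyP => aT.
by move/implyP: (bc T TST); apply; move/implyP: (ab T TST); apply.
Qed.

Lemma Nsubeq_rcons TS T a b :
  Nsubeq (rcons TS T) a b = ((a \in T) ==> (b \in T)) && Nsubeq TS a b.
Proof. by rewrite /Nsubeq all_rcons. Qed.

Lemma in_newmf TS z b : (b \in newmf TS z) = Nsubeq TS z b.
Proof.
elim: TS => [|T TS IH]; first by rewrite inE.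
by rewrite /newmf /=; case: (z \in T); rewrite /= -/(newmf TS z) ?inE IH.
Qed.

Lemma newmf_subset TS T z : T \in TS -> z \in T -> newmf TS z \subset T.
Proof.
move=> TST zT; apply/subsetP => b; rewrite in_newmf => /allP/(_ T TST).
by rewrite zT.
Qed.

Lemma mem_newmf TS z : z \in newmf TS z.
Proof. by rewrite in_newmf Nsubeq_refl. Qed.

Lemma eq_newmf TS z w : Nsubeq TS z w -> Nsubeq TS w z -> newmf TS z = newmf TS w.
Proof.
move=> zw wz; apply/setP => b; rewrite !in_newmf.
by apply/idP/idP; [exact: Nsubeq_trans | exact: Nsubeq_trans].
Qed.

Lemma in_hM M T a : (a \in hM M T) = has (fun m : conj => (m \subset T) && (a \in m)) M.
Proof.
elim: M => [|m M IH]; first by rewrite /hM big_nil inE.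
by rewrite /hM big_cons -/(hM M T) /=; case: (m \subset T); rewrite //= inE IH.
Qed.

Lemma hM_subset M T : hM M T \subset T.
Proof. by apply/subsetP => a; rewrite in_hM => /hasP [m _ /andP [/subsetP mT /mT]]. Qed.

Lemma count_le_in (A : Type) (p q : pred A) s :
  all (fun x => p x ==> q x) s -> count p s <= count q s.
Proof.
elim: s => //= x s IH /andP [pq_x /IH pq_s].
by apply: leq_add; case: (p x) pq_x => // /= ->.
Qed.

Lemma count_lt_in (A : Type) (p q : pred A) s :
  all (fun x => p x ==> q x) s -> has (fun x => q x && ~~ p x) s ->
  count p s < count q s.
Proof.
elim: s => //= x s IH /andP [pq_x pq_s] /orP [/andP [qx /negbTE px] | has_s].
  by rewrite px qx add1n ltnS count_le_in.
by rewrite -addnS leq_add ?IH //; case: (p x) pq_x => // /= ->.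
Qed.

Lemma Nsub_count TS a b :
  Nsub TS a b -> count (fun T : conj => a \in T) TS < count (fun T : conj => b \in T) TS.
Proof. by case/andP; apply: count_lt_in. Qed.

Definition minimal TS D z : bool :=
  (z \in D) && [forall z', (z' \in D) ==> ~~ Nsub TS z' z].

Lemma exists_minimal TS D x : x \in D -> exists2 z, minimal TS D z & Nsubeq TS z x.
Proof.
move=> xD; pose cnt z := count (fun T : conj => z \in T) TS.
have x_ok : (x \in D) && Nsubeq TS x x by rewrite xD Nsubeq_refl.
case: (@arg_minnP _ x (fun z => (z \in D) && Nsubeq TS z x) cnt x_ok) => z /andP [zD zx] zmin.
exists z => //; rewrite /minimal zD; apply/forallP => z'; apply/implyP => z'D.
apply/negP => z'z; have := Nsub_count z'z; rewrite -/(cnt z') -/(cnt z).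
rewrite ltnNge zmin // z'D /=; apply: Nsubeq_trans zx.
by move: z'z; rewrite NsubE => /andP [].
Qed.

Lemma minimal_newmf TS D z w :
  minimal TS D z -> w \in D -> Nsubeq TS w z -> newmf TS w = newmf TS z.
Proof.
case/andP => _ /forallP/(_ w) zmin wD wz; apply: eq_newmf => //.
by move: zmin; rewrite wD NsubE wz /= negbK.
Qed.

Lemma setD_hM_neq0 M T : T != hM M T -> T :\: hM M T != set0.
Proof.
by rewrite setD_eq0; apply: contra => T_sub; rewrite eqEsubset T_sub hM_subset.
Qed.

Lemma alg3_step_None TS M : alg3_step TS M = None -> {in TS, forall T, T = hM M T}.
Proof.
rewrite /alg3_step; case E: [seq T <- TS | _] => [|T0 s] /=.
  move=> _ T TST; apply/eqP; apply: contraT => T_new.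
  have : T \in [seq T <- TS | T != hM M T] by rewrite mem_filter T_new.
  by rewrite E.
have : T0 \in [seq T <- TS | T != hM M T] by rewrite E mem_head.
rewrite mem_filter => /andP [T0_new _].
have /set0Pn [x xD] := setD_hM_neq0 T0_new.
have [z zmin _] := exists_minimal TS xD.
case E2: [seq z <- enum 'I_n | _] => [|z0 s'] //.
have : z \in [seq z <- enum 'I_n | minimal TS (T0 :\: hM M T0) z].
  by rewrite mem_filter zmin mem_enum.
by rewrite E2.
Qed.

Lemma alg3_step_Some TS M m : alg3_step TS M = Some m ->
  exists T z, [/\ T \in TS, z \in T :\: hM M T & m = newmf TS z].
Proof.
rewrite /alg3_step; case E: [seq T <- TS | _] => [|T s] //=.
case E2: [seq z <- enum 'I_n | _] => [|z s'] //= [<-].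
have : T \in [seq T <- TS | T != hM M T] by rewrite E mem_head.
have : z \in [seq z <- enum 'I_n | minimal TS (T :\: hM M T) z] by rewrite E2 mem_head.
by rewrite !mem_filter => /andP [/andP [zD _] _] /andP [_ TST]; exists T, z.
Qed.

Definition covered TS M : {set 'I_(size TS) * 'I_n} :=
  [set iz : 'I_(size TS) * 'I_n | iz.2 \in hM M (nth set0 TS iz.1)].

Lemma card_covered TS M : #|covered TS M| <= n * size TS.
Proof. by rewrite (leq_trans (max_card _)) // card_prod !card_ord mulnC. Qed.

Lemma covered_step TS M m :
  alg3_step TS M = Some m -> covered TS M \proper covered TS (rcons M m).
Proof.
case/alg3_step_Some => T [z [TST /setDP [zT zM] m_def]].
have covered_sub : covered TS M \subset covered TS (rcons M m).
  by apply/subsetP => iz; rewrite !inE !in_hM has_rcons => ->; rewrite orbT.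
rewrite properE covered_sub; apply/subsetPn.
have T_idx : index T TS < size TS by rewrite index_mem.
by exists (Ordinal T_idx, z); rewrite !inE /= nth_index // in_hM has_rcons m_def
  newmf_subset ?mem_newmf.
Qed.

Lemma alg3_fuel_spec TS fuel M :
  n * size TS < fuel + #|covered TS M| -> {subset M <= codom (newmf TS)} ->
  {in TS, forall T, T = hM (alg3_fuel fuel TS M) T} /\
  {subset alg3_fuel fuel TS M <= codom (newmf TS)}.
Proof.
elim: fuel M => [|fuel IH] M /=; first by rewrite add0n ltnNge card_covered.
case E: (alg3_step TS M) => [m|] fuel_ok M_mfs; last by split => //; apply: alg3_step_None.
apply: IH.
  by rewrite (leq_trans fuel_ok) // addSn -addnS leq_add2l proper_card ?covered_step.
move=> m'; rewrite mem_rcons inE => /predU1P [-> | /M_mfs //].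
by case/alg3_step_Some: E => T [z [_ _ ->]]; apply: codom_f.
Qed.

Lemma alg3_spec TS :
  {in TS, forall T, T = hM (alg3 TS) T} /\ {subset alg3 TS <= codom (newmf TS)}.
Proof. by apply: alg3_fuel_spec => //; rewrite addSn ltnS leq_addr. Qed.

Definition minimal_mfs TS : {set conj} :=
  newmf TS @: [set z | has (fun T => minimal TS T z) TS].

Definition separated TS : {set 'I_n * 'I_n} := [set ab | ~~ Nsubeq TS ab.1 ab.2].

Definition potential TS : nat := #|separated TS| + #|minimal_mfs TS|.

Lemma minimal_mfs_alg3 TS : {subset minimal_mfs TS <= alg3 TS}.
Proof.
move=> X /imsetP [z]; rewrite inE => /hasP [T TST zmin] ->.
have [covers mfs] := alg3_spec TS.
have : z \in hM (alg3 TS) T by rewrite -covers //; case/andP: zmin.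
rewrite in_hM => /hasP [m m_alg /andP [mT zm]].
have /codomP [w m_def] := mfs m m_alg.
have wT : w \in T by apply: (subsetP mT); rewrite m_def mem_newmf.
have wz : Nsubeq TS w z by rewrite -in_newmf -m_def.
by rewrite -(minimal_newmf zmin wT wz) -m_def.
Qed.

Lemma separated_rcons TS T : separated TS \subset separated (rcons TS T).
Proof.
by apply/subsetP => ab; rewrite !inE Nsubeq_rcons negb_and => ->; rewrite orbT.
Qed.

Lemma minimal_mfs_rcons_uncovered TS M T :
  T != hM M T -> exists2 X, X \in minimal_mfs (rcons TS T) & X \notin M.
Proof.
move=> /setD_hM_neq0 /set0Pn [w /setDP [wT wM]].
have [z zmin zw] := exists_minimal (rcons TS T) wT.
exists (newmf (rcons TS T) z).
  by apply/imsetP; exists z; rewrite // inE has_rcons zmin.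
apply: contra wM => XM; rewrite in_hM; apply/hasP; exists (newmf (rcons TS T) z) => //.
by rewrite newmf_subset ?mem_rcons ?mem_head ?in_newmf //; case/andP: zmin.
Qed.

Section Rcons.
Variables (TS : seq conj) (T : conj) (z : 'I_n).
Hypothesis keep : forall b, Nsubeq TS z b -> Nsubeq (rcons TS T) z b.

Lemma newmf_rcons : newmf (rcons TS T) z = newmf TS z.
Proof.
apply/setP => b; rewrite !in_newmf; apply/idP/idP => [|/keep //].
by rewrite Nsubeq_rcons => /andP [].
Qed.

Lemma minimal_rcons D : minimal TS D z -> minimal (rcons TS T) D z.
Proof.
case/andP => zD /forallP zmin; rewrite /minimal zD; apply/forallP => z'.
apply/implyP => z'D; move: (zmin z'); rewrite z'D /= !NsubE.
apply: contra => /andP [z'z zz']; move: z'z; rewrite Nsubeq_rcons => /andP [_ ->].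
by apply: contra zz'; apply: keep.
Qed.

End Rcons.

Lemma card_minimal_mfs_lost TS T :
  #|minimal_mfs TS :\: minimal_mfs (rcons TS T)| <=
  #|separated (rcons TS T) :\: separated TS|.
Proof.
set TS' := rcons TS T.
suff lost_sub : minimal_mfs TS :\: minimal_mfs TS' \subset
                (fun ab => newmf TS ab.1) @: (separated TS' :\: separated TS).
  exact: leq_trans (subset_leq_card lost_sub) (leq_imset_card _ _).
apply/subsetP => X /setDP [/imsetP [z]]; rewrite inE => /hasP [T0 T0TS zmin] -> lost.
have /existsP [b /andP [zb zb']] : [exists b, Nsubeq TS z b && ~~ Nsubeq TS' z b].
  apply: contraR lost; rewrite negb_exists => /forallP keep.
  have keep' b : Nsubeq TS z b -> Nsubeq TS' z b.
    by move=> zb; move: (keep b); rewrite zb negbK.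
  rewrite -(newmf_rcons keep'); apply/imsetP; exists z => //.
  by rewrite inE has_rcons; apply/orP; right; apply/hasP; exists T0; last exact: minimal_rcons.
by apply/imsetP; exists (z, b); rewrite // !inE /= negbK zb zb'.
Qed.

Lemma potential_rcons TS M T :
  {subset minimal_mfs TS <= M} -> T != hM M T -> potential TS < potential (rcons TS T).
Proof.
move=> mfsM T_new; have [X XTS' XM] := minimal_mfs_rcons_uncovered TS T_new.
have gained : 0 < #|minimal_mfs (rcons TS T) :\: minimal_mfs TS|.
  by apply/card_gt0P; exists X; rewrite inE XTS' andbT; apply: contra XM; apply: mfsM.
have lost := card_minimal_mfs_lost TS T.
have sep := cardsID (separated TS) (separated (rcons TS T)).
rewrite (setIidPr (separated_rcons TS T)) in sep.
have mfs := cardsID (minimal_mfs TS) (minimal_mfs (rcons TS T)).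
have mfs' := cardsID (minimal_mfs (rcons TS T)) (minimal_mfs TS).
rewrite setIC in mfs'.
rewrite /potential; lia.
Qed.

Lemma card_separated TS : #|separated TS| <= n ^ 2.
Proof. by rewrite (leq_trans (max_card _)) // card_prod card_ord mulnn. Qed.

Lemma card_minimal_mfs k (mf : 'I_k -> conj) (y : 'I_k -> 'I_n) TS :
  (forall j, y j \in mf j) -> (forall j i, y j \in mf i -> i = j) ->
  (forall T, T \in TS -> exists S : {set 'I_k}, T = \bigcup_(i in S) mf i) ->
  #|minimal_mfs TS| <= k.
Proof.
move=> y_mf y_anchor unions.
suff mfs_sub : minimal_mfs TS \subset [set newmf TS (y j) | j : 'I_k].
  apply: leq_trans (subset_leq_card mfs_sub) _.
  by apply: leq_trans (leq_imset_card _ _) _; rewrite card_ord.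
apply/subsetP => X /imsetP [z]; rewrite inE => /hasP [T TST zmin] ->.
have [S T_def] := unions T TST.
have /bigcupP [j jS zj] : z \in \bigcup_(i in S) mf i by rewrite -T_def; case/andP: zmin.
have yT : y j \in T by rewrite T_def; apply/bigcupP; exists j.
have y_z : Nsubeq TS (y j) z.
  apply/allP => T' T'TS; apply/implyP; have [S' ->] := unions T' T'TS.
  case/bigcupP => i iS' /y_anchor i_j; apply/bigcupP; exists j => //.
  by rewrite -i_j.
by apply/imsetP; exists j; rewrite // (minimal_newmf zmin yT).
Qed.

Definition alg4_inv (st : seq conj * seq conj) : Prop :=
  {subset minimal_mfs st.1 <= st.2} /\ size st.1 <= potential st.1.

Lemma alg4_step_inv st T : alg4_inv st -> alg4_inv (alg4_step st T).
Proof.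
case: st => TS M [mfsM size_le]; rewrite /alg4_step; case: ifP => // T_new.
split; first exact: minimal_mfs_alg3.
by rewrite /= size_rcons (leq_ltn_trans size_le) ?(potential_rcons mfsM).
Qed.

Lemma alg4_invariant (targets : seq conj) : alg4_inv (alg4 targets).
Proof.
rewrite /alg4; have : alg4_inv ([::], [::]) by split=> // X /imsetP [z]; rewrite inE.
by elim: targets ([::], [::]) => //= T s IH st /(alg4_step_inv T) /IH.
Qed.

Lemma alg4_subset (targets : seq conj) : {subset (alg4 targets).1 <= targets}.
Proof.
suff foldl_sub s st : {subset (foldl (@alg4_step n) st s).1 <= st.1 ++ s} by apply: foldl_sub.
elim: s st => [|T s IH] [TS M] /=; first by rewrite cats0.
move=> X /IH; rewrite -cat_rcons !mem_cat => /orP [|->]; last by rewrite orbT.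
by rewrite /alg4_step; case: ifP => _ /= XTS; rewrite ?XTS // mem_rcons inE XTS orbT.
Qed.

End Metafeatures.

Lemma anchor_cond_choice n k (mf : 'I_k -> {set 'I_n}) :
  anchor_cond mf ->
  exists2 y : 'I_k -> 'I_n, forall j, y j \in mf j & forall j i, y j \in mf i -> i = j.
Proof.
move=> anchor.
have anchor' j : exists2 y, y \in mf j & forall i, y \in mf i -> i = j.
  have [y [yj y_other]] := anchor j; exists y => // i yi.
  by apply/eqP; apply: contraTT yi; apply: y_other.
exact: fin_all_exists2 anchor'.
Qed.

Theorem theorem3 (n k : nat) (mf : 'I_k -> {set 'I_n})
  (targets : seq {set 'I_n})
  (Hanchor : anchor_cond mf)
  (Hunion : forall T, T \in targets ->
     exists S : {set 'I_k}, T = \bigcup_(i in S) mf i) :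
  size (alg4 targets).1 <= n ^ 2 + k.
Proof.
have [y y_mf y_anchor] := anchor_cond_choice Hanchor.
have [_ size_le] := alg4_invariant targets.
rewrite (leq_trans size_le) // leq_add ?card_separated //.
by apply: (card_minimal_mfs y_mf y_anchor) => T /alg4_subset; apply: Hunion.
Qed.
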